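(* Let $n\ge 1$, $0\le d\le n$, and let $g:\mathcal{X}_n\to[0,1]$ belong to $\mathcal{G}_n^{(d)}$, so that its angle map has the multilinear expansion \[ \Theta_g(b)=\sum_{S\subseteq[n],\,|S|\le d}\widehat{\Theta}_S\,\chi_S(b),\qquad \widehat{\Theta}_S=\sum_{T\subseteq S}(-1)^{|S\setminus T|}\,\Theta_g(\mathbf{1}_T). \] Then the encoding operator factors as \[ G_g=\prod_{S\subseteq[n],\,|S|\le d} C^S R_Y\bigl(\widehat{\Theta}_S\bigr) \] (the factors may be taken in any order). Consequently $G_g$ can be implemented with exactly $\sum_{k=0}^{d}\binom{n}{k}$ controlled-$R_Y$ gates, one for each subset $S\subseteq[n]$ with $|S|\le d$.
   Context: Let $\mathbb{B}=\{0,1\}$, $[n]=\{0,1,\dots,n-1\}$, $N=2^n$. The uniform grid is $\mathcal{X}_n=\{x_i=i/N: i=0,\dots,N-1\}$, and for $b=(b_0,\dots,b_{n-1})\in\mathbb{B}^n$ the grid index is $i(b)=\sum_k b_k2^k$. The angle map of $g:\mathcal{X}_n\to[0,1]$ is $\Theta_g:\mathbb{B}^n\to[0,\pi]$, $\Theta_g(b)=2\arcsin\bigl(\sqrt{g(x_{i(b)})}\bigr)$. For $S\subseteq[n]$, $\chi_S(b)=\prod_{j\in S}b_j$, and $\mathbf{1}_T\in\mathbb{B}^n$ is the indicator vector of $T\subseteq[n]$. Every $f:\mathbb{B}^n\to\mathbb{R}$ has a unique expansion $f=\sum_{S\subseteq[n]}\hat f_S\chi_S$; its multilinear degree is $\max\{|S|:\hat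 f_S\neq 0\}$. The class $\mathcal{G}_n^{(d)}$ is the set of $g:\mathcal{X}_n\to[0,1]$ with $\deg(\Theta_g)\le d$. Let $R_Y(\theta)=\begin{pmatrix}\cos(\theta/2)&-\sin(\theta/2)\\ \sin(\theta/2)&\cos(\theta/2)\end{pmatrix}$. On $\mathbb{C}^{N}\otimes\mathbb{C}^2$ with standard basis $\{\mathbf{u}_b\otimes \mathbf{u}^{(2)}_c\}$ (index register indexed by $b\in\mathbb{B}^n$, one ancilla qubit), the encoding operator $G_g$ is the block-diagonal unitary acting by $G_g(\mathbf{u}_b\otimes v)=\mathbf{u}_b\otimes R_Y(\Theta_g(b))v$ for all $v\in\mathbb{C}^2$; in particular $G_g(\mathbf{u}_{b}\otimes\mathbf{u}^{(2)}_0)=\mathbf{u}_{b}\otimes(\sqrt{1-g(x_{i(b)})}\,\mathbf{u}^{(2)}_0+\sqrt{g(x_{i(b)})}\,\mathbf{u}^{(2)}_1)$. For $S\subseteq[n]$ and $\alpha\in\mathbb{R}$, the controlled gate $C^SR_Y(\alpha)$ acts by $\mathbf{u}_b\otimes v\mapsto \mathbf{u}_b\otimes R_Y(\alpha\,\chi_S(b))v$, i.e. it applies $R_Y(\alpha)$ to the ancilla iff all index qubits in $S$ equal $1$ (for $S=\emptyset$ it is an unconditional rotation). *)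

From HB Require Import structures.
From mathcomp Require Import all_boot all_order all_algebra.
From mathcomp Require Import reals trigo.
Set Implicit Arguments. Unset Strict Implicit. Unset Printing Implicit Defensive.
Import Order.TTheory GRing.Theory Num.Theory.
Local Open Scope ring_scope.

Section Defs.
Variable R : realType.
Variable n : nat.

Definition bits := {ffun 'I_n -> bool}.

Definition gidx (b : bits) : nat := (\sum_(k < n) (b k : nat) * 2 ^ k)%N.

Definition gridpt (i : nat) : R := i%:R / (2 ^ n)%:R.

Definition Theta (g : R -> R) (b : bits) : R :=
  2 * asin (Num.sqrt (g (gridpt (gidx b)))).

Definition chi (S : {set 'I_n}) (b : bits) : R := \prod_(j in S) (b j)%:R.

Definition ind (T : {set 'I_n}) : bits := [ffun j => j \in T].

Definition fhat (f : bits -> R) (S : {set 'I_n}) : R :=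
  \sum_(T : {set 'I_n} | T \subset S) (-1) ^+ #|S :\: T| * f (ind T).

Definition deg_le (f : bits -> R) (d : nat) : Prop :=
  forall S : {set 'I_n}, (d < #|S|)%N -> fhat f S = 0.

(* basis of C^N (x) C^2 : pairs (b, c), c = ancilla bit (false = |0>, true = |1>) *)
Definition basis := (bits * bool)%type.

(* operators on the space, given by their (real) matrix entries in this basis *)
Definition op := basis -> basis -> R.

Definition op_mul (A B : op) : op := fun x y => \sum_(z : basis) A x z * B z y.
Definition op_id : op := fun x y => (x == y)%:R.

(* R_Y(theta) entry (row c, column c') *)
Definition RY (theta : R) (c c' : bool) : R :=
  match c, c' with
  | false, false => cos (theta / 2)
  | false, true => - sin (theta / 2)
  | true, false => sin (theta / 2)
  | true, true => cos (theta / 2)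
  end.

(* encoding operator G_g : u_b (x) v |-> u_b (x) R_Y(Theta_g(b)) v *)
Definition Genc (g : R -> R) : op :=
  fun x y => if x.1 == y.1 then RY (Theta g x.1) x.2 y.2 else 0.

(* controlled gate C^S R_Y(alpha) : u_b (x) v |-> u_b (x) R_Y(alpha chi_S(b)) v *)
Definition CRY (S : {set 'I_n}) (alpha : R) : op :=
  fun x y => if x.1 == y.1 then RY (alpha * chi S x.1) x.2 y.2 else 0.

Definition op_prod (s : seq op) : op := foldr op_mul op_id s.

End Defs.

Arguments gridpt {R} n i.
Arguments Theta {R} n g b.
Arguments Genc {R} n g x y.

(* The encoding operator and every gate C^S R_Y(a) are block diagonal over the
   index register, acting on the ancilla of block b by an R_Y rotation.  Since
   R_Y(a) R_Y(b) = R_Y(a + b), any product of such gates is again of this form,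
   with angle sum_S a_S chi_S(b) in block b, whatever the order of the factors.
   For a_S = hat Theta_S this sum is Theta_g(b) by Moebius inversion on the
   lattice of subsets, and the terms with |S| > d vanish by the degree bound. *)

From HB Require Import structures.
From mathcomp Require Import all_boot all_order all_algebra.
From mathcomp Require Import reals trigo boolp.
From mathcomp Require Import ring.
Set Implicit Arguments.
Unset Strict Implicit.
Unset Printing Implicit Defensive.

Import Order.TTheory GRing.Theory Num.Theory.
Local Open Scope ring_scope.

Section BooleanLattice.
Variables (R : comPzRingType) (I : finType).

Lemma sum_sign_interval (T B : {set I}) :
  \sum_(S : {set I})
     (if (T \subset S) && (S \subset B) then (-1) ^+ #|S :\: T| else 0 : R)
  = (T == B)%:R.
Proof.
(* The summand is a product over i of a factor depending only on whether i lies
   in T, S and B; summing the factor over i \in S or not gives [(i \in T) == (i \in B)]. *)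
pose inS (t b : bool) : R := if b then (if t then 1 else -1) else 0.
pose outS (t b : bool) : R := if t then 0 else 1.
have factor (S : {set I}) : (if (T \subset S) && (S \subset B) then (-1) ^+ #|S :\: T| else 0)
    = \prod_i (if i \in S then inS (i \in T) (i \in B) else outS (i \in T) (i \in B)).
  case: (boolP (T \subset S)) => [sTS|/subsetPn[i Ti Si]] /=; last first.
    by rewrite [RHS](bigD1 i) //= (negbTE Si) Ti mul0r.
  case: (boolP (S \subset B)) => [sSB|/subsetPn[i Si Bi]]; last first.
    by rewrite [RHS](bigD1 i) //= Si (negbTE Bi) mul0r.
  rewrite -prodr_const big_mkcond; apply: eq_bigr => i _; rewrite in_setD /inS /outS.
  case: (boolP (i \in S)) => Si; first by rewrite (subsetP sSB i Si); case: (i \in T).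
  by rewrite (contraNF (subsetP sTS i) Si).
under eq_bigr => S _ do rewrite factor.
rewrite -bigA_distr; case: eqP => [<-|/eqP neTB].
  by apply: big1 => i _; rewrite /= /inS /outS; case: (i \in T); rewrite ?addr0 ?add0r.
have [i Ti_Bi] : exists i, (i \in T) != (i \in B).
  apply/existsP; apply: contraR neTB => /existsPn sameTB.
  by apply/eqP/setP => i; move/negPn/eqP: (sameTB i).
rewrite (bigD1 i) //= {1}/inS {1}/outS.
by case: (i \in T) (i \in B) Ti_Bi => -[] //= _; rewrite ?addr0 ?addNr mul0r.
Qed.

Lemma moebius_inversion (f : {set I} -> R) (B : {set I}) :
  f B = \sum_(S : {set I})
          (\sum_(T : {set I} | T \subset S) (-1) ^+ #|S :\: T| * f T)
          * (S \subset B)%:R.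
Proof.
transitivity (\sum_(T : {set I}) (T == B)%:R * f T).
  by rewrite (bigD1 B) //= eqxx mul1r big1 ?addr0 // => T /negbTE ->; rewrite mul0r.
under eq_bigr => T _ do rewrite -sum_sign_interval big_distrl /=.
rewrite exchange_big; apply: eq_bigr => S _.
rewrite big_distrl /= [RHS]big_mkcond; apply: eq_bigr => T _.
by case: (T \subset S); case: (S \subset B); rewrite ?mulr1 ?mulr0 ?mul0r.
Qed.

End BooleanLattice.

Lemma card_sets_le (I : finType) (d : nat) :
  #|[set A : {set I} | #|A| <= d]%N| = (\sum_(k < d.+1) 'C(#|I|, k))%N.
Proof.
rewrite -sum1_card (partition_big (fun A : {set I} => inord #|A| : 'I_d.+1) xpredT) //=.
apply: eq_bigr => k _; rewrite -card_draws -sum1_card; apply: eq_bigl => A.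
rewrite !inE -val_eqE /=; case: (boolP (#|A| <= d)%N) => [leAd|/negbTE gtAd] /=.
  by rewrite inordK.
by apply/esym/negbTE; apply: contraFneq gtAd => ->; rewrite -ltnS ltn_ord.
Qed.

Section MultilinearExpansion.
Variables (R : realType) (n : nat).

Lemma chi_subset (S : {set 'I_n}) (b : bits n) :
  chi R S b = (S \subset [set j | b j])%:R.
Proof.
rewrite /chi; case: (boolP (S \subset _)) => [sSb|/subsetPn[j Sj]].
  by apply: big1 => j /(subsetP sSb); rewrite inE => ->.
by rewrite inE => /negbTE bj; rewrite (bigD1 j) //= bj mul0r.
Qed.

Lemma fhat_expansion (f : bits n -> R) (b : bits n) :
  f b = \sum_(S : {set 'I_n}) fhat f S * chi R S b.
Proof.
have indK : ind [set j | b j] = b by apply/ffunP => j; rewrite ffunE inE.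
transitivity ((f \o @ind n) [set j | b j]); first by rewrite /= indK.
rewrite moebius_inversion.
by apply: eq_bigr => S _; rewrite chi_subset.
Qed.

Lemma fhat_expansion_deg (f : bits n -> R) (d : nat) (b : bits n) :
  deg_le f d -> f b = \sum_(S : {set 'I_n} | (#|S| <= d)%N) fhat f S * chi R S b.
Proof.
move=> degf; rewrite fhat_expansion (bigID (fun S : {set 'I_n} => (#|S| <= d)%N)) /=.
by rewrite [X in _ + X]big1 ?addr0 // => S; rewrite -ltnNge => /degf ->; rewrite mul0r.
Qed.

End MultilinearExpansion.

Section BlockRotations.
Variables (R : realType) (n : nat).

Definition blockRY (theta : bits n -> R) : op R n :=
  fun x y => if x.1 == y.1 then RY (theta x.1) x.2 y.2 else 0.

Lemma RYD (a b : R) (c c' : bool) :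
  RY (a + b) c c' = \sum_(z : bool) RY a c z * RY b z c'.
Proof. by rewrite big_bool; case: c; case: c'; rewrite /= mulrDl ?cosD ?sinD; ring. Qed.

Lemma op_mul_blockRY (theta1 theta2 : bits n -> R) :
  op_mul (blockRY theta1) (blockRY theta2) = blockRY (theta1 \+ theta2).
Proof.
apply: funext => x; apply: funext => y; rewrite /op_mul /blockRY /=.
rewrite -(pair_bigA _ (fun b c => (if x.1 == b then RY (theta1 x.1) x.2 c else 0)
                                  * (if b == y.1 then RY (theta2 b) c y.2 else 0))) /=.
rewrite (bigD1 x.1) //= eqxx [X in _ + X]big1 ?addr0; last first.
  by move=> b /negbTE neb; apply: big1 => c _; rewrite eq_sym neb mul0r.
by case: eqP => _; [rewrite RYD | apply: big1 => c _; rewrite mulr0].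
Qed.

Lemma blockRY0 : blockRY (fun=> 0) = @op_id R n.
Proof.
apply: funext => -[b c]; apply: funext => -[b' c']; rewrite /op_id /blockRY /=.
rewrite xpair_eqE; case: eqP => _ //=.
by case: c; case: c'; rewrite /= mul0r ?cos0 ?sin0 ?oppr0.
Qed.

Lemma op_prod_CRY (s : seq {set 'I_n}) (alpha : {set 'I_n} -> R) :
  op_prod [seq CRY A (alpha A) | A <- s]
  = blockRY (fun b => \sum_(A <- s) alpha A * chi R A b).
Proof.
elim: s => [|A s IHs] /=.
  by rewrite -blockRY0; congr blockRY; apply: funext => b; rewrite big_nil.
rewrite /op_prod /= -/(op_prod _) IHs.
rewrite (_ : CRY A (alpha A) = blockRY (fun b => alpha A * chi R A b)) //.
by rewrite op_mul_blockRY; congr blockRY; apply: funext => b; rewrite big_cons.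
Qed.

End BlockRotations.

Theorem mainTheorem1 (R : realType) (n d : nat) (g : R -> R) :
  (1 <= n)%N -> (d <= n)%N ->
  (forall i : nat, (i < 2 ^ n)%N -> 0 <= g (gridpt n i) <= 1) ->
  deg_le (Theta n g) d ->
  forall s : seq {set 'I_n},
    uniq s -> (forall A : {set 'I_n}, (A \in s) = (#|A| <= d)%N) ->
    Genc n g = op_prod [seq CRY A (fhat (Theta n g) A) | A <- s]
    /\ size s = (\sum_(k < d.+1) 'C(n, k))%N.
Proof.
move=> _ _ _ degTheta s uniq_s s_small; split.
  rewrite op_prod_CRY; change (Genc n g) with (blockRY (Theta n g)).
  congr blockRY; apply: funext => b.
  rewrite (fhat_expansion_deg b degTheta) big_uniq //.
  by apply: eq_bigl => A; rewrite s_small.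
rewrite -(card_uniqP uniq_s) -[in RHS](card_ord n) -card_sets_le.
by apply: eq_card => A; rewrite inE s_small.
Qed.
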